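(* Let $((A_i,B_i))_{i\in\mathbb N}$ be an increasing sequence of oriented separations of a locally finite graph $G$ whose underlying separations are tight, and let $(A,B)=(\bigcup_iA_i,\bigcap_iB_i)$. If $B\neq\emptyset$, then every $v\in A\cap B$ has a neighbour $w\in B\setminus A$ such that for infinitely many $i\in\mathbb N$ the vertex $w$ lies in a tight component $K_i$ of $G-(A_i\cap B_i)$ with $V(K_i)\subseteq B_i\setminus A_i$. In particular, $N_G(B\setminus A)=A\cap B$.
   Context: A separation of $G$ is an unordered pair $\{A,B\}$ of subsets of $V(G)$ with $A\cup B=V(G)$ and no edge between $A\setminus B$ and $B\setminus A$; oriented separations are ordered by $(A,B)\le(C,D)$ iff $A\subseteq C$ and $B\supseteq D$. For $X\subseteq V(G)$, a component $K$ of $G-X$ is tight if $N_G(K)=X$. A separation $\{A,B\}$ is tight if both $A\setminus B$ and $B\setminus A$ contain the vertex set of a tight component of $G-(A\cap B)$. *)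

From Stdlib Require Import List Relations.

Record graph (V : Type) := Graph {
  adj : V -> V -> Prop;
  adj_sym : forall u v, adj u v -> adj v u;
  adj_irrefl : forall v, ~ adj v v
}.
Arguments adj {V} g u v.

Definition vset (V : Type) := V -> Prop.

Definition locally_finite {V} (G : graph V) : Prop :=
  forall v, exists l : list V, forall w, adj G v w -> In w l.

(* a separation (as an ordered pair; its underlying unordered separation is
   {A,B}): A ∪ B = V(G) and no edge between A\B and B\A *)
Definition is_separation {V} (G : graph V) (A B : vset V) : Prop :=
  (forall v, A v \/ B v) /\
  (forall u w, A u -> ~ B u -> B w -> ~ A w -> ~ adj G u w).

Definition sep_le {V} (A B C D : vset V) : Prop :=
  (forall v, A v -> C v) /\ (forall v, D v -> B v).

Definition adj_minus {V} (G : graph V) (X : vset V) : relation V :=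
  fun u w => adj G u w /\ ~ X u /\ ~ X w.

Definition is_component {V} (G : graph V) (X K : vset V) : Prop :=
  (exists v, K v) /\
  (forall v, K v -> ~ X v) /\
  (forall u w, K u -> K w -> clos_refl_trans V (adj_minus G X) u w) /\
  (forall u w, K u -> adj G u w -> ~ X w -> K w).

Definition nbhd {V} (G : graph V) (S : vset V) : vset V :=
  fun x => ~ S x /\ exists y, S y /\ adj G x y.

Definition tight_component {V} (G : graph V) (X K : vset V) : Prop :=
  is_component G X K /\ (forall x, nbhd G K x <-> X x).

Definition sep_sides_inter {V} (A B : vset V) : vset V := fun x => A x /\ B x.

Definition tight_separation {V} (G : graph V) (A B : vset V) : Prop :=
  is_separation G A B /\
  (exists K, tight_component G (sep_sides_inter A B) K /\
             forall v, K v -> A v /\ ~ B v) /\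
  (exists K, tight_component G (sep_sides_inter A B) K /\
             forall v, K v -> B v /\ ~ A v).

(* For v ∈ A ∩ B we have v ∈ A_i ∩ B_i for all large i, so by tightness v has
   a neighbour in a tight component K_i ⊆ B_i \ A_i of G - (A_i ∩ B_i).  Since
   v has only finitely many neighbours, a pigeonhole argument gives one
   neighbour w lying in such a K_i for infinitely many i; monotonicity of the
   sequence then forces w ∈ B \ A.  Hence every vertex of A ∩ B has a
   neighbour in B \ A; conversely a neighbour x ∉ B \ A of B \ A lies in every
   B_i (otherwise it would be an edge across the separation (A_i, B_i)) and so
   in A ∩ B.  Together this is N_G(B \ A) = A ∩ B. *)

From Stdlib Require Import List Relations Arith.
From Stdlib Require Import Classical Lia.

Definition infinitely_often (Q : nat -> Prop) : Prop :=
  forall n, exists i, n <= i /\ Q i.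

Lemma infinitely_often_pigeonhole {X : Type} (l : list X) (P : nat -> X -> Prop) :
  infinitely_often (fun i => exists w, In w l /\ P i w) ->
  exists w, In w l /\ infinitely_often (fun i => P i w).
Proof.
  induction l as [|a l IH]; intros Hinf.
  - destruct (Hinf 0) as [i [_ [w [[] _]]]].
  - destruct (classic (infinitely_often (fun i => P i a))) as [Ha|Ha].
    + exists a; split; [left; reflexivity | exact Ha].
    + (* a stops working after some n0, so from then on the witness is in l *)
      apply not_all_ex_not in Ha as [n0 Hn0].
      destruct IH as [w [Hw Hw_inf]].
      * intros n. destruct (Hinf (max n n0)) as [i [Hi [w [[<-|Hw] HP]]]].
        -- exfalso; apply Hn0; exists i; split; [lia | exact HP].
        -- exists i; split; [lia |]. exists w; split; assumption.
      * exists w; split; [right; exact Hw | exact Hw_inf].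
Qed.

Section LimitSeparation.

Variable V : Type.
Variable G : graph V.
Variables As Bs : nat -> vset V.

Hypothesis tight : forall i, tight_separation G (As i) (Bs i).
Hypothesis increasing :
  forall i j, i <= j -> sep_le (As i) (Bs i) (As j) (Bs j).

Definition limA : vset V := fun x => exists i, As i x.
Definition limB : vset V := fun x => forall i, Bs i x.

Definition in_right_tight_component (i : nat) (w : V) : Prop :=
  exists K, tight_component G (sep_sides_inter (As i) (Bs i)) K /\
            K w /\ (forall x, K x -> Bs i x /\ ~ As i x).

(* A vertex of A_i ∩ B_i is adjacent to the right tight component of the
   tight separation (A_i, B_i), since that component has neighbourhood
   exactly A_i ∩ B_i. *)
Lemma separator_vertex_has_right_neighbour (i : nat) (v : V) :
  As i v -> Bs i v ->
  exists y, adj G v y /\ in_right_tight_component i y.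
Proof.
  intros HvA HvB.
  destruct (tight i) as [_ [_ [K [[HK HN] HKright]]]].
  destruct (proj2 (HN v) (conj HvA HvB)) as [_ [y [Ky Hvy]]].
  exists y; split; [exact Hvy |].
  exists K; split; [split; assumption | split; assumption].
Qed.

Lemma infinitely_often_right_in_limit (w : V) :
  infinitely_often (fun i => Bs i w /\ ~ As i w) -> limB w /\ ~ limA w.
Proof.
  intros Hinf; split.
  - intros j. destruct (Hinf j) as [i [Hji [HwB _]]].
    exact (proj2 (increasing j i Hji) w HwB).
  - intros [j HwA]. destruct (Hinf j) as [i [Hji [_ HwA']]].
    exact (HwA' (proj1 (increasing j i Hji) w HwA)).
Qed.

Lemma limit_separator_vertex_neighbour (v : V) :
  locally_finite G -> limA v -> limB v ->
  exists w, adj G v w /\ limB w /\ ~ limA w /\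
            infinitely_often (fun i => in_right_tight_component i w).
Proof.
  intros Hlf [i0 Hv0] HvB.
  destruct (Hlf v) as [nbrs Hnbrs].
  destruct (infinitely_often_pigeonhole nbrs
              (fun i w => adj G v w /\ in_right_tight_component i w))
    as [w [_ Hw]].
  - (* v ∈ A_i ∩ B_i for every i ≥ i0 *)
    intros n. exists (max n i0); split; [lia |].
    assert (HvA : As (max n i0) v)
      by exact (proj1 (increasing i0 (max n i0) ltac:(lia)) v Hv0).
    destruct (separator_vertex_has_right_neighbour (max n i0) v HvA (HvB _))
      as [y [Hvy Hy]].
    exists y; split; [apply Hnbrs; exact Hvy | split; assumption].
  - destruct (Hw 0) as [i [_ [Hvw _]]].
    assert (Hright : infinitely_often (fun i => Bs i w /\ ~ As i w)).
    { intros n. destruct (Hw n) as [i' [Hi' [_ [K [_ [Kw HK]]]]]].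
      exists i'; split; [exact Hi' | exact (HK w Kw)]. }
    destruct (infinitely_often_right_in_limit w Hright) as [HwB HwA].
    exists w; split; [exact Hvw |]; split; [exact HwB |]; split; [exact HwA |].
    intros n. destruct (Hw n) as [i' [Hi' [_ Hcomp]]].
    exists i'; split; assumption.
Qed.

(* A neighbour of B \ A outside B \ A lies in every B_i (an edge from
   A_i \ B_i to B_i \ A_i is impossible), hence in A ∩ B. *)
Lemma neighbour_of_limit_right_side (x : V) :
  nbhd G (fun y => limB y /\ ~ limA y) x -> limA x /\ limB x.
Proof.
  intros [Hx [y [[HyB HyA] Hxy]]].
  assert (HxB : limB x).
  { intros j. destruct (tight j) as [[Hcover Hno_edge] _].
    destruct (Hcover x) as [HxA | HxB]; [| exact HxB].
    apply NNPP; intro HxB.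
    apply (Hno_edge x y HxA HxB (HyB j)); [| exact Hxy].
    intro HyAj; apply HyA; exists j; exact HyAj. }
  split; [| exact HxB].
  apply NNPP; intro HxA. apply Hx; split; assumption.
Qed.

End LimitSeparation.

Theorem mainTheorem7 (V : Type) (G : graph V) (As Bs : nat -> vset V) :
  locally_finite G ->
  (forall i, tight_separation G (As i) (Bs i)) ->
  (forall i j, i <= j -> sep_le (As i) (Bs i) (As j) (Bs j)) ->
  let A : vset V := fun x => exists i, As i x in
  let B : vset V := fun x => forall i, Bs i x in
  (exists x, B x) ->
  (forall v, A v -> B v ->
     exists w, adj G v w /\ B w /\ ~ A w /\
       (forall n, exists i, n <= i /\
          exists K, tight_component G (sep_sides_inter (As i) (Bs i)) K /\
                    K w /\ (forall x, K x -> Bs i x /\ ~ As i x))) /\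
  (forall x, nbhd G (fun y => B y /\ ~ A y) x <-> (A x /\ B x)).
Proof.
  intros Hlf Htight Hincr A B _.
  pose proof (limit_separator_vertex_neighbour V G As Bs Htight Hincr) as Hnbr.
  split.
  - intros v HvA HvB. exact (Hnbr v Hlf HvA HvB).
  - intros x; split.
    + exact (neighbour_of_limit_right_side V G As Bs Htight x).
    + intros [HxA HxB].
      destruct (Hnbr x Hlf HxA HxB) as [w [Hxw [HwB [HwA _]]]].
      split; [intros [_ HxA']; exact (HxA' HxA) |].
      exists w; split; [split; assumption | exact Hxw].
Qed.
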